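(* Let $G$ be a finite group and let $n$ be a positive integer. If $\mathrm{VPA}_n(G)\ne\emptyset$ then every prime divisor of $n$ divides $|G|$.
   Context: For a positive integer $k$, $\zeta_k$ denotes a complex primitive $k$-th root of unity; $\mathrm{Tr}_{F/K}$ is the trace map. $\sum_{x^G}$ denotes a sum over representatives of the conjugacy classes of $G$. Brauer characters modulo a prime $p$ are taken w.r.t. a sufficiently large $p$-modular system. $\mathrm{VPA}_n(G)$ is the set of lists $\varepsilon=(\varepsilon_d)_{d\mid n}$ of integer-valued class functions of $G$, indexed by the positive divisors of $n$, such that: (V1) $\sum_{x^G}\varepsilon_d(x)=1$ for each $d$; (V2) $\varepsilon_d(1)=0$ if $d\ne n$; (V3) $\varepsilon_d(x)=0$ if $|x|$ does not divide $n/d$; (V4) for every ordinary character $\chi$ of $G$ or Brauer character $\chi$ of $G$ modulo a prime not dividing $n$, and every $l\in\mathbb{Z}$, $\frac{1}{n}\sum_{x^G}\sum_{d\mid n}\varepsilon_d(x)\mathrm{Tr}_{\mathbb{Q}(\zeta_n^d)/\mathbb{Q}}(\chi(x)\zeta_n^{-ld})$ is a non-negative integer. *)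

From HB Require Import structures.
From mathcomp Require Import all_boot all_order all_algebra all_fingroup all_solvable all_field all_character.

Set Implicit Arguments.
Unset Strict Implicit.
Unset Printing Implicit Defensive.

Import GRing.Theory Num.Theory.
Local Open Scope ring_scope.

(* sigma_j : the automorphism of Q(zeta_k) sending every k-th root of unity w
   to w^j (j coprime to k), extended to an automorphism of algC. *)
Definition galQn (k j : nat) : algC -> algC :=
  match coprime j k as b return coprime j k = b -> algC -> algC with
  | true => fun h => sval (Qn_aut_exists h)
  | false => fun _ => id
  end erefl.

(* Tr_{Q(zeta_k)/Q}(a) = sum over Gal(Q(zeta_k)/Q) ~ (Z/k)^* of sigma_j(a). *)
Definition trQn (k : nat) (a : algC) : algC :=
  \sum_(j < k | coprime j k) galQn k j a.

Definition root_of_unity (F : fieldType) (a : F) : Prop :=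
  exists m : nat, (0 < m)%N /\ a ^+ m = 1.

(* An injective group homomorphism from the roots of unity of F into algC^x
   (the identification of p'-roots of unity coming from a p-modular system). *)
Definition rou_lift (F : fieldType) (lam : F -> algC) : Prop :=
  (forall a b, root_of_unity a -> root_of_unity b -> lam (a * b) = lam a * lam b)
  /\ (forall a b, root_of_unity a -> root_of_unity b -> lam a = lam b -> a = b)
  /\ (forall a, root_of_unity a -> lam a != 0).

(* phi (on p-regular elements of G) is the Brauer character mod p of some
   representation of G over an algebraically closed field of characteristic p. *)
Definition is_Brauer_char (gT : finGroupType) (G : {group gT}) (p : nat)
    (phi : gT -> algC) : Prop :=
  exists (F : closedFieldType) (lam : F -> algC) (k : nat)
         (rG : mx_representation F G k),
    p \in [pchar F] /\ rou_lift lam /\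
    forall x, x \in G -> ((p^').-elt x)%g ->
      exists s : seq F,
        char_poly (rG x) = \prod_(a <- s) ('X - a%:P) /\
        phi x = \sum_(a <- s) lam a.

Definition V4_sum (gT : finGroupType) (G : {group gT}) (n : nat) (z : algC)
    (eps : nat -> gT -> int) (chi : gT -> algC) (l : int) : algC :=
  n%:R^-1 * \sum_(C in classes G) \sum_(d <- divisors n)
     (eps d (repr C))%:~R * trQn (n %/ d)%N (chi (repr C) * z ^ (- (l * d%:Z))).

(* eps = (eps_d)_{d | n} is in VPA_n(G), with zeta_n := z. *)
Definition in_VPA (gT : finGroupType) (G : {group gT}) (n : nat) (z : algC)
    (eps : nat -> gT -> int) : Prop :=
  (* integer-valued class functions of G *)
  (forall d, (d %| n)%N -> forall x g, x \in G -> g \in G -> eps d (x ^ g)%g = eps d x)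
  (* (V1) *)
  /\ (forall d, (d %| n)%N -> \sum_(C in classes G) eps d (repr C) = 1)
  (* (V2) *)
  /\ (forall d, (d %| n)%N -> (d != n)%N -> eps d 1%g = 0)
  (* (V3) *)
  /\ (forall d, (d %| n)%N -> forall x, x \in G -> ~~ (#[x]%g %| n %/ d)%N -> eps d x = 0)
  (* (V4), ordinary characters *)
  /\ (forall chi : 'CF(G), chi \is a character -> forall l : int,
        V4_sum G n z eps (fun x => chi x) l \is a Num.nat)
  (* (V4), Brauer characters modulo primes not dividing n *)
  /\ (forall p phi, prime p -> ~~ (p %| n)%N -> is_Brauer_char G p phi ->
        forall l : int, V4_sum G n z eps phi l \is a Num.nat).

Definition VPA_nonempty (gT : finGroupType) (G : {group gT}) (n : nat) (z : algC) : Prop :=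
  exists eps : nat -> gT -> int, in_VPA G n z eps.

From HB Require Import structures.
From mathcomp Require Import all_boot all_order all_algebra all_fingroup all_solvable all_field all_character.

(* Condition (V4) for the regular character and [l = 0] already forces [n] to
   divide [|G|]: by (V3) for [d = n], [eps_n] vanishes off the identity, so (V1)
   makes it the indicator of the identity; by (V2) every other [eps_d] vanishes
   at the identity, where alone the regular character is nonzero. The (V4) sum
   therefore collapses to [|G| / n], which must be a natural number. *)

Set Implicit Arguments.
Unset Strict Implicit.
Unset Printing Implicit Defensive.

Import GRing.Theory Num.Theory.
Local Open Scope ring_scope.

Lemma galQn_natr k j m : galQn k j m%:R = m%:R.
Proof.
rewrite /galQn; generalize (@erefl bool (coprime j k)).
by case: {2 3}(coprime j k) => h //; apply: rmorph_nat.
Qed.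

Lemma trQn0 k : trQn k 0 = 0.
Proof. by rewrite /trQn big1 // => j _; rewrite -(mulr0n 1) galQn_natr. Qed.

Lemma trQn1_natr m : trQn 1 m%:R = m%:R.
Proof. by rewrite /trQn big_mkcond big_ord_recl big_ord0 /= addr0 galQn_natr. Qed.

Section RegularCharacter.

Variables (gT : finGroupType) (G : {group gT}) (n : nat) (z : algC).
Variable eps : nat -> gT -> int.
Hypothesis n_gt0 : (0 < n)%N.

Lemma repr_class_neq1 C : C \in classes G -> C != [set 1%g] ->
  repr C \in G /\ repr C != 1%g.
Proof.
move=> /repr_classesP[Gx defC] notC1; split=> //.
by apply: contraNneq notC1 => x1; rewrite defC x1 class1G.
Qed.

Lemma eps_top_at1 :
    \sum_(C in classes G) eps n (repr C) = 1 ->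
    (forall x, x \in G -> ~~ (#[x]%g %| n %/ n)%N -> eps n x = 0) ->
  eps n 1%g = 1.
Proof.
move=> sum_eps_n V3n; rewrite -sum_eps_n (bigD1 [set 1%g]) ?classes1 //=.
rewrite repr_set1 big1 ?addr0 // => C /andP[GC notC1].
have [Gx x1] := repr_class_neq1 GC notC1.
by apply: V3n; rewrite // divnn n_gt0 dvdn1 order_eq1.
Qed.

Lemma V4_sum_cfReg0 :
    eps n 1%g = 1 -> (forall d, (d %| n)%N -> (d != n)%N -> eps d 1%g = 0) ->
  V4_sum G n z eps (fun x => cfReg G x) 0 = #|G|%:R / n%:R.
Proof.
move=> eps_n1 V2; rewrite /V4_sum (bigD1 [set 1%g]) ?classes1 //= repr_set1.
rewrite [X in _ * (_ + X)]big1 ?addr0 => [|C /andP[GC notC1]]; last first.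
  have [_ x1] := repr_class_neq1 GC notC1.
  by rewrite big1 // => d _; rewrite cfRegE (negPf x1) mul0r trQn0 mulr0.
have n_div : n \in divisors n by rewrite -dvdn_divisors.
rewrite (bigD1_seq n n_div (divisors_uniq n)) /= big1_seq ?addr0; last first.
  by move=> d /andP[d_n]; rewrite -dvdn_divisors // => /V2->; rewrite // mul0r.
rewrite eps_n1 divnn n_gt0 cfRegE eqxx mul0r oppr0 expr0z mulr1 trQn1_natr.
by rewrite mul1r mulrC.
Qed.

End RegularCharacter.

Lemma VPA_dvdn_order (gT : finGroupType) (G : {group gT}) (n : nat) (z : algC) :
  (0 < n)%N -> VPA_nonempty G n z -> (n %| #|G|)%N.
Proof.
move=> n_gt0 [eps [_ [V1 [V2 [V3 [V4 _]]]]]].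
have eps_n1 := eps_top_at1 n_gt0 (V1 n (dvdnn n)) (V3 n (dvdnn n)).
have /natrP[m Gn] := V4 _ (cfReg_char G) 0.
rewrite (V4_sum_cfReg0 G z n_gt0 eps_n1 V2) in Gn.
have n_neq0 : n%:R != 0 :> algC by rewrite pnatr_eq0 -lt0n.
have /eqP : #|G|%:R = (n * m)%:R :> algC by rewrite natrM -Gn mulrC (divfK n_neq0).
by rewrite eqr_nat => /eqP->; apply: dvdn_mulr.
Qed.

Local Close Scope ring_scope.

Theorem proposition3p3 (gT : finGroupType) (G : {group gT}) (n : nat)
    (z : algC) :
  (0 < n)%N -> (n.-primitive_root z)%R -> VPA_nonempty G n z ->
  forall p : nat, prime p -> p %| n -> p %| #|G|.
Proof.
move=> n_gt0 _ VPA_n p _ p_n.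
exact: dvdn_trans p_n (VPA_dvdn_order n_gt0 VPA_n).
Qed.
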